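(* Let $\alpha:R\to R'$ be a Jordan homomorphism and let $R''$ be the subring of $R'$ generated by $R^\alpha$. Let $H$ and $H''$ be the centres of $E_2(R)$ and $E_2(R'')$, respectively. Then: (a) for every finite sequence $T$ in $R$, $E(T)\in H$ implies $E(T^\alpha)\in H''$; (b) the set $N_\alpha:=\{E(T^\alpha)\mid T \text{ a finite sequence in } R \text{ with } E(T)=I\}$ is contained in $H''$; (c) $N_\alpha$ is a normal subgroup of $E_2(R'')$, and the mapping $\alpha_E:E_2(R)\to E_2(R'')/N_\alpha$, $E(T)\mapsto N_\alpha\cdot E(T^\alpha)$ (for finite sequences $T$ in $R$) is a well defined homomorphism of groups.
   Context: Rings are associative with $1$, preserved by homomorphisms and inherited by subrings. A Jordan homomorphism $\alpha:R\to R'$ is a map with $(a+b)^\alpha=a^\alpha+b^\alpha$, $1^\alpha=1'$, $(aba)^\alpha=a^\alpha b^\alpha a^\alpha$ for all $a,b\in R$. For $t$ in a ring let $E(t):=\begin{pmatrix} t&1\\-1&0\end{pmatrix}$; for a finite sequence $T=(t_1,\ldots,t_n)$ ($n\geq 0$) let $E(T):=E(t_1)E(t_2)\cdots E(t_n)$ (the identity $I$ if $n=0$), and $T^\alpha:=(t_1^\alpha,\ldots,t_n^\alpha)$. $E_2(R)$ is the subgroup of $GL_2(R)$ generated by all $E(t)$, $t\in R$; every element of $E_2(R)$ has the form $E(T)$. Its centre is $E_2(R)\cap\{\mathrm{diag}(a,a)\mid a \text{ a central unit of } R\}$. *)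

From HB Require Import structures.
From mathcomp Require Import all_boot all_order all_algebra.
Set Implicit Arguments. Unset Strict Implicit. Unset Printing Implicit Defensive.
Import GRing.Theory.
Local Open Scope ring_scope.

Definition jordan_hom (R R' : pzRingType) (f : R -> R') : Prop :=
  [/\ forall a b, f (a + b) = f a + f b,
      f 1 = 1 &
      forall a b, f (a * b * a) = f a * f b * f a].

Definition gen_subring (R R' : pzRingType) (f : R -> R') (x : R') : Prop :=
  forall S : R' -> Prop,
    S 1 -> (forall a b, S a -> S b -> S (a - b)) ->
    (forall a b, S a -> S b -> S (a * b)) ->
    (forall r, S (f r)) -> S x.

(* E(t) = [[t, 1], [-1, 0]] *)
Definition Emx (R : pzRingType) (t : R) : 'M[R]_2 :=
  \matrix_(i < 2, j < 2)
    if (i : nat) == 0%N then (if (j : nat) == 0%N then t else 1)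
    else (if (j : nat) == 0%N then -1 else 0).

Definition Eseq (R : pzRingType) (T : seq R) : 'M[R]_2 :=
  foldr (fun t M => Emx t *m M) 1%:M T.

(* E_2(S) for a subring S of R, realized inside 'M[R]_2:
   the matrices E(T) with T a finite sequence of elements of S. *)
Definition E2on (R : pzRingType) (S : R -> Prop) (M : 'M[R]_2) : Prop :=
  exists T : seq R, (forall t, t \in T -> S t) /\ M = Eseq T.

Definition E2 (R : pzRingType) : 'M[R]_2 -> Prop := E2on (fun _ => True).

Definition centre (R : pzRingType) (G : 'M[R]_2 -> Prop) (M : 'M[R]_2) : Prop :=
  G M /\ forall g, G g -> M *m g = g *m M.

Definition normal_subgroup (R : pzRingType) (G N : 'M[R]_2 -> Prop) : Prop :=
  [/\ forall M, N M -> G M,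
      N 1%:M,
      forall X Y, N X -> N Y -> N (X *m Y),
      forall X Y, N X -> X *m Y = 1%:M -> Y *m X = 1%:M -> N Y &
      forall g g' X, G g -> g *m g' = 1%:M -> g' *m g = 1%:M -> N X ->
        N (g *m X *m g')].

Definition coset (R : pzRingType) (N : 'M[R]_2 -> Prop) (A : 'M[R]_2)
  (M : 'M[R]_2) : Prop := exists X, N X /\ M = X *m A.

Definition setmul (R : pzRingType) (P Q : 'M[R]_2 -> Prop) (M : 'M[R]_2) : Prop :=
  exists X Y, P X /\ Q Y /\ M = X *m Y.

Definition Nalpha (R R' : pzRingType) (f : R -> R') (M : 'M[R']_2) : Prop :=
  exists T : seq R, Eseq T = 1%:M /\ M = Eseq (map f T).

(* Sandwiching Y by E(t) on both sides, Y |-> E(t) Y E(t), maps the diagonal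
   entries of Y and the two pairings s Y01 - Y10 s, Y01 s - s Y10 to sums of
   such quantities and Jordan triple products, so a Jordan homomorphism
   commutes with them along any product E(T) Y E(rev T).  When E(T) is central
   it is a central scalar and this sandwich is the identity; applied to the
   upper matrix units, the diagonal entries then force E(T^α), whose inverse is
   E(rev T^α) with rows and columns swapped, to be a scalar commuting with R^α,
   hence with R''.  The rest is formal: N_α is central, hence normal, and
   E(T1) = E(T2) puts E((T1 T2^-1)^α) in N_α. *)

From mathcomp Require Import all_boot all_order all_algebra.
Set Implicit Arguments. Unset Strict Implicit.
Import GRing.Theory.
Local Open Scope ring_scope.

Ltac ring2_simpl :=
  rewrite ?(mulr0n, mulr1n, mulr0, mul0r, mulr1, mul1r, mulrN1, mulN1r, oppr0, opprK,
            addr0, add0r, subrr, addNr).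

Section Matrices.
Context {X : pzRingType}.
Implicit Types (a r t : X) (T : seq X).

Lemma ord2P (i : 'I_2) : i = 0 \/ i = 1.
Proof. by case: i => [[|[|n]] Hn]; [left|right|]; try apply: val_inj. Qed.

Lemma matrix2P (A B : 'M[X]_2) :
  A 0 0 = B 0 0 -> A 0 1 = B 0 1 -> A 1 0 = B 1 0 -> A 1 1 = B 1 1 -> A = B.
Proof.
move=> e00 e01 e10 e11; apply/matrixP => i j.
by case: (ord2P i) => ->; case: (ord2P j) => ->.
Qed.

Lemma mulmx2E (A B : 'M[X]_2) i j :
  (A *m B) i j = A i 0 * B 0 j + A i 1 * B 1 j.
Proof.
rewrite mxE !big_ord_recl big_ord0 addr0.
by congr (_ * _ + A i _ * B _ j); apply: val_inj.
Qed.

Lemma mulmx_scale_deltaE n (A N : 'M[X]_n) r k l i j :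
  (A *m (r *: delta_mx k l) *m N) i j = A i k * r * N l j.
Proof.
rewrite mxE (bigD1 l) //= big1 => [|m /negbTE ml]; last first.
  by rewrite mxE big1 ?mul0r // => p _; rewrite !mxE ml andbF !mulr0.
rewrite addr0 mxE (bigD1 k) //= big1 => [|p /negbTE pk]; last first.
  by rewrite !mxE pk !mulr0.
by rewrite addr0 !mxE !eqxx mulr1.
Qed.

Lemma scalar_mx_comm n a (Y : 'M[X]_n) :
  (forall i j, a * Y i j = Y i j * a) -> a%:M *m Y = Y *m a%:M.
Proof.
move=> aY; apply/matrixP => i j; rewrite mul_scalar_mx !mxE aY.
rewrite (bigD1 j) //= big1 => [|k /negbTE kj]; last by rewrite mxE kj mulr0n mulr0.
by rewrite mxE eqxx mulr1n addr0.
Qed.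

Lemma Emx_centralizer M :
  (forall t, M *m Emx t = Emx t *m M) ->
  M = (M 0 0)%:M /\ forall t, M 0 0 * t = t * M 0 0.
Proof.
move=> cM; have e t i j := congr1 (fun A : 'M[X]_2 => A i j) (cM t).
have := e 0 0 0; have := e 0 0 1; have := e 1 0 1; rewrite !mulmx2E !mxE /=.
ring2_simpl => M00E M11E M10E.
have M01 : M 0 1 = 0 by apply: (addIr (M 1 1)); rewrite -M00E add0r.
have M10 : M 1 0 = 0 by rewrite -M10E M01 oppr0.
have aC t : M 0 0 * t = t * M 0 0.
  by have := e t 0 0; rewrite !mulmx2E !mxE /= M10 M01; ring2_simpl.
by split=> //; apply: matrix2P; rewrite !mxE /= ?M01 ?M10 ?M11E; ring2_simpl.
Qed.

Lemma Eseq_cat T1 T2 : Eseq (T1 ++ T2) = Eseq T1 *m Eseq T2.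
Proof. by elim: T1 => [|t T IH] /=; rewrite ?mul1mx // IH mulmxA. Qed.

Lemma Eseq_rcons T t : Eseq (rcons T t) = Eseq T *m Emx t.
Proof. by rewrite -cats1 Eseq_cat /= mulmx1. Qed.

Definition flip_mx : 'M[X]_2 := \matrix_(i, j) (i != j)%:R.

Lemma flip_mxK : flip_mx *m flip_mx = 1%:M.
Proof. by apply: matrix2P; rewrite mulmx2E !mxE /=; ring2_simpl. Qed.

Lemma flip_Emx t : flip_mx *m Emx t *m flip_mx = Eseq [:: 0; - t; 0].
Proof. by apply: matrix2P; rewrite /= mulmx1 !mulmx2E !mxE /=; ring2_simpl. Qed.

Lemma Emx_flipK t : Emx t *m (flip_mx *m Emx t *m flip_mx) = 1%:M.
Proof. by apply: matrix2P; rewrite !mulmx2E !mxE /=; ring2_simpl. Qed.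

Lemma flip_EmxK t : (flip_mx *m Emx t *m flip_mx) *m Emx t = 1%:M.
Proof. by apply: matrix2P; rewrite !mulmx2E !mxE /=; ring2_simpl. Qed.

Definition inv_seq T := flatten [seq [:: 0; - t; 0] | t <- rev T].

Lemma inv_seq_cons t T : inv_seq (t :: T) = inv_seq T ++ [:: 0; - t; 0].
Proof. by rewrite /inv_seq rev_cons map_rcons -cats1 flatten_cat. Qed.

Lemma Eseq_inv_seq T : Eseq (inv_seq T) = flip_mx *m Eseq (rev T) *m flip_mx.
Proof.
elim: T => [|t T IH]; first by rewrite /= mulmx1 flip_mxK.
rewrite inv_seq_cons Eseq_cat IH -flip_Emx rev_cons Eseq_rcons !mulmxA.
by rewrite -(mulmxA _ flip_mx flip_mx) flip_mxK mulmx1.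
Qed.

Lemma Eseq_inv_seqK T : Eseq T *m Eseq (inv_seq T) = 1%:M.
Proof.
elim: T => [|t T IH] /=; first by rewrite mulmx1.
rewrite inv_seq_cons Eseq_cat -flip_Emx -mulmxA (mulmxA (Eseq T)) IH mul1mx.
exact: Emx_flipK.
Qed.

Lemma Eseq_inv_seqVK T : Eseq (inv_seq T) *m Eseq T = 1%:M.
Proof.
elim: T => [|t T IH] /=; first by rewrite mulmx1.
rewrite inv_seq_cons Eseq_cat -flip_Emx mulmxA -(mulmxA _ _ (Emx t)) flip_EmxK.
by rewrite mulmx1.
Qed.

Definition sandwich T (Y : 'M[X]_2) := Eseq T *m Y *m Eseq (rev T).

Lemma sandwich_cons t T Y : sandwich (t :: T) Y = Emx t *m sandwich T Y *m Emx t.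
Proof. by rewrite /sandwich rev_cons Eseq_rcons /= !mulmxA. Qed.

Lemma sandwich_central T Y :
  (forall t, Eseq T *m Emx t = Emx t *m Eseq T) -> sandwich T Y = Y.
Proof.
move=> /Emx_centralizer [ET aC].
have aY (Z : 'M[X]_2) : (Eseq T 0 0)%:M *m Z = Z *m (Eseq T 0 0)%:M.
  by apply: scalar_mx_comm.
have ETN : Eseq T *m Eseq (rev T) = 1%:M.
  have cF : Eseq T *m flip_mx = flip_mx *m Eseq T by rewrite ET aY.
  have -> : Eseq T *m Eseq (rev T) =
            flip_mx *m (Eseq T *m Eseq (inv_seq T)) *m flip_mx.
    rewrite Eseq_inv_seq !mulmxA -cF -(mulmxA _ flip_mx flip_mx) flip_mxK mulmx1.
    by rewrite -(mulmxA (Eseq T)) flip_mxK mulmx1.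
  by rewrite Eseq_inv_seqK mulmx1 flip_mxK.
by rewrite /sandwich ET aY -mulmxA -ET ETN mulmx1.
Qed.

Lemma Emx_sandwichE t (Y : 'M[X]_2) :
  let Z := Emx t *m Y *m Emx t in
  [/\ Z 0 0 = t * Y 0 0 * t - (t * Y 0 1 - Y 1 0 * t) - Y 1 1,
      Z 0 1 = t * Y 0 0 + Y 1 0, Z 1 0 = Y 0 1 - Y 0 0 * t & Z 1 1 = - Y 0 0].
Proof.
rewrite /= !mulmx2E !mxE /=; ring2_simpl.
split=> //; last by rewrite mulNr addrC.
by rewrite mulrDl opprD opprB !addrA.
Qed.

Lemma scalar_mx_of_diag_sandwich (A N : 'M[X]_2) :
  (flip_mx *m N *m flip_mx) *m A = 1%:M ->
  (forall k l i : 'I_2,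
     (k <= l)%N -> (A *m delta_mx k l *m N) i i = delta_mx k l i i) ->
  A = (A 0 0)%:M /\ N 0 0 * A 0 0 = 1.
Proof.
move=> BA diagAN.
have dg (k l i : 'I_2) (kl : (k <= l)%N) : A i k * N l i = delta_mx k l i i.
  by rewrite -(diagAN k l i kl) -[delta_mx k l]scale1r mulmx_scale_deltaE mulr1.
have BAE i j := congr1 (fun B : 'M[X]_2 => B i j) BA.
move: (dg 0 0 0 isT) (dg 1 1 1 isT) (dg 0 0 1 isT) (dg 1 1 0 isT) (dg 0 1 0 isT)
  (dg 0 1 1 isT) (BAE 0 0) (BAE 0 1) (BAE 1 0) (BAE 1 1).
rewrite !mulmx2E !mxE /=; ring2_simpl.
set a : X := A 0 0; set b : X := A 0 1; set c : X := A 1 0; set d : X := A 1 1.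
set e : X := N 0 0; set f : X := N 0 1; set g : X := N 1 0; set h : X := N 1 1.
move=> ae dh cf bg ag ch ha_gc hb_gd fa_ec fb_ed.
have ed : e * d = 1 - f * b by rewrite -fb_ed addrAC subrr add0r.
have ce : c * e = 0.
  rewrite -[c * e]mulr1 -dh mulrA -(mulrA c e d) ed mulrBr mulr1 mulrBl mulrA cf.
  by rewrite !mul0r ch subr0.
have dg0 : d * g = 0.
  rewrite -[d * g]mul1r -ae -mulrA (mulrA e) ed mulrBl mul1r mulrBr -!mulrA bg.
  by rewrite !mulr0 ag subr0.
have af : a * f = 0.
  have : a * (f * a + e * c) * e = 0 by rewrite fa_ec mulr0 mul0r.
  by rewrite mulrDr mulrDl -!mulrA ae ce mulr1 !mulr0 addr0.
have bh : b * h = 0.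
  have : d * (h * b + g * d) * h = 0 by rewrite hb_gd mulr0 mul0r.
  by rewrite mulrDr mulrDl -!mulrA dh mulr1 dg0 addr0 mulrA dh mul1r.
have c0 : c = 0 by rewrite -[c]mulr1 -fb_ed mulrDr !mulrA cf ce !mul0r addr0.
have b0 : b = 0 by rewrite -[b]mulr1 -ha_gc mulrDr !mulrA bh bg !mul0r addr0.
have da : d = a by rewrite -[a]mulr1 -fb_ed mulrDr !mulrA af ae mul0r mul1r add0r.
split; last by rewrite -fb_ed b0 mulr0 add0r da.
by apply: matrix2P; rewrite !mxE /= ?mulr0n ?mulr1n.
Qed.

Lemma scalar_mx_comm_Eseq a S :
  {in S, forall t, a * t = t * a} -> a%:M *m Eseq S = Eseq S *m a%:M.
Proof.
elim: S => [|t S IH] aS /=; first by rewrite mul1mx mulmx1.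
have aEt : a%:M *m Emx t = Emx t *m a%:M.
  apply: scalar_mx_comm => i j; case: (ord2P i) => ->; case: (ord2P j) => ->;
  rewrite !mxE /=; ring2_simpl => //; first exact: aS (mem_head t S).
by rewrite mulmxA aEt -mulmxA IH ?mulmxA // => u uS; apply: aS; rewrite inE uS orbT.
Qed.

End Matrices.

Section JordanHomomorphism.
Context {R R' : pzRingType} (f : R -> R').
Hypothesis fJ : jordan_hom f.

Lemma jordan_homD a b : f (a + b) = f a + f b.
Proof. by case: fJ. Qed.

Lemma jordan_hom1 : f 1 = 1.
Proof. by case: fJ. Qed.

Lemma jordan_homJ a b : f (a * b * a) = f a * f b * f a.
Proof. by case: fJ. Qed.

Lemma jordan_hom0 : f 0 = 0.
Proof. by apply: (addrI (f 0)); rewrite addr0 -jordan_homD addr0. Qed.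

Lemma jordan_homN a : f (- a) = - f a.
Proof. by apply/eqP; rewrite -subr_eq0 opprK -jordan_homD addNr jordan_hom0. Qed.

Lemma jordan_homB a b : f (a - b) = f a - f b.
Proof. by rewrite jordan_homD jordan_homN. Qed.

(* Linearize [aba] at [a + c]. *)
Lemma jordan_hom_triple a b c :
  f (a * b * c + c * b * a) = f a * f b * f c + f c * f b * f a.
Proof.
have expand (S : pzRingType) (x y z : S) :
    x * y * z + z * y * x = (x + z) * y * (x + z) - x * y * x - z * y * z.
  rewrite !(mulrDl, mulrDr) -(addrA (x * y * x)) (addrC (x * y * x)) addrK.
  by rewrite addrA addrK addrC.
by rewrite !expand !jordan_homB !jordan_homJ jordan_homD.
Qed.

Definition jordan_related (Y : 'M[R]_2) (Y' : 'M[R']_2) : Prop :=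
  [/\ f (Y 0 0) = Y' 0 0, f (Y 1 1) = Y' 1 1 &
      forall s, f (s * Y 0 1 - Y 1 0 * s) = f s * Y' 0 1 - Y' 1 0 * f s /\
                f (Y 0 1 * s - s * Y 1 0) = Y' 0 1 * f s - f s * Y' 1 0].

Lemma jordan_related_Emx t Y Y' : jordan_related Y Y' ->
  jordan_related (Emx t *m Y *m Emx t) (Emx (f t) *m Y' *m Emx (f t)).
Proof.
case=> f00 f11 fs.
have [Z00 Z01 Z10 Z11] := Emx_sandwichE t Y.
have [Z'00 Z'01 Z'10 Z'11] := Emx_sandwichE (f t) Y'.
have sideL (S : pzRingType) (s u y z w : S) :
    s * (u * y + z) - (w - y * u) * s = s * u * y + y * u * s - (w * s - s * z).
  by rewrite mulrDr mulrBl !mulrA !opprB addrACA.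
have sideR (S : pzRingType) (s u y z w : S) :
    (u * y + z) * s - s * (w - y * u) = u * y * s + s * y * u - (s * w - z * s).
  by rewrite mulrDl mulrBr !mulrA !opprB addrACA.
split.
- by rewrite Z00 Z'00 2!jordan_homB jordan_homJ f00 f11 (fs t).1.
- by rewrite Z11 Z'11 jordan_homN f00.
move=> s; rewrite Z01 Z10 Z'01 Z'10; split.
- by rewrite !sideL jordan_homB jordan_hom_triple f00 (fs s).2.
- by rewrite !sideR jordan_homB jordan_hom_triple f00 (fs s).1.
Qed.

Lemma jordan_related_sandwich T Y Y' : jordan_related Y Y' ->
  jordan_related (sandwich T Y) (sandwich (map f T) Y').
Proof.
move=> rYY'; elim: T => [|t T IH]; first by rewrite /sandwich /= !mul1mx !mulmx1.
by rewrite !sandwich_cons; apply: jordan_related_Emx.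
Qed.

Lemma jordan_related_diag r (k : 'I_2) :
  jordan_related (r *: delta_mx k k) (f r *: delta_mx k k).
Proof.
by case: (ord2P k) => ->; split=> [||s]; try split; rewrite !mxE /=; ring2_simpl;
  rewrite ?jordan_hom0.
Qed.

Lemma jordan_related_delta (k l : 'I_2) :
  (k <= l)%N -> jordan_related (delta_mx k l) (delta_mx k l).
Proof.
by case: (ord2P k) => ->; case: (ord2P l) => -> // _; split=> [||s]; try split;
  rewrite !mxE /=; ring2_simpl; rewrite ?jordan_hom0 ?jordan_hom1.
Qed.

Lemma Eseq_map_scalar T : (forall t, Eseq T *m Emx t = Emx t *m Eseq T) ->
  exists2 a, Eseq (map f T) = a%:M & forall r, a * f r = f r * a.
Proof.
move=> cT; set A := Eseq (map f T); set N := Eseq (rev (map f T)).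
have rel Y Y' : jordan_related Y Y' -> jordan_related Y (A *m Y' *m N).
  by move=> /(jordan_related_sandwich T); rewrite sandwich_central.
have diag (k l i : 'I_2) :
    (k <= l)%N -> (A *m delta_mx k l *m N) i i = delta_mx k l i i.
  move=> /jordan_related_delta /rel [d00 d11 _].
  have fdelta j : f (delta_mx k l j j) = delta_mx k l j j.
    by rewrite !mxE; case: (_ && _); rewrite ?mulr1n ?jordan_hom1 ?jordan_hom0.
  by case: (ord2P i) => ->; rewrite -?d00 -?d11 fdelta.
have NA : (flip_mx *m N *m flip_mx) *m A = 1%:M by rewrite -Eseq_inv_seq Eseq_inv_seqVK.
have [AE N00A00] := scalar_mx_of_diag_sandwich NA diag.
exists (A 0 0) => // r.
have [fr _ _] := rel _ _ (jordan_related_diag r 0).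
move: fr; rewrite mulmx_scale_deltaE !mxE /= mulr1 => fr.
by rewrite {2}fr -!mulrA N00A00 mulr1.
Qed.

Lemma gen_subring_image r : gen_subring f (f r).
Proof. by move=> S _ _ _; apply. Qed.

Lemma gen_subring_comm a :
  (forall r, a * f r = f r * a) -> forall y, gen_subring f y -> a * y = y * a.
Proof.
move=> af y gy; apply: (gy (fun y => a * y = y * a)) => // [|x z ax az|x z ax az].
- by rewrite mulr1 mul1r.
- by rewrite mulrBr mulrBl ax az.
- by rewrite mulrA ax -mulrA az mulrA.
Qed.

Lemma E2on_gen_subring_map T : E2on (gen_subring f) (Eseq (map f T)).
Proof. by exists (map f T); split=> // _ /mapP [r _ ->]; apply: gen_subring_image. Qed.

Lemma map_inv_seq T : map f (inv_seq T) = inv_seq (map f T).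
Proof.
elim: T => [|t T IH] //.
by rewrite map_cons !inv_seq_cons map_cat IH /= jordan_hom0 jordan_homN.
Qed.

Lemma centre_Eseq_map T :
  centre (E2 (R:=R)) (Eseq T) -> centre (E2on (gen_subring f)) (Eseq (map f T)).
Proof.
case=> _ cT; have cE t : Eseq T *m Emx t = Emx t *m Eseq T.
  by rewrite -[Emx t]mulmx1; apply: cT; exists [:: t].
have [a Ea af] := Eseq_map_scalar cE.
split=> [|_ [S [gS ->]]]; first exact: E2on_gen_subring_map.
by rewrite Ea; apply: scalar_mx_comm_Eseq => s /gS; apply: gen_subring_comm.
Qed.

Lemma Nalpha_centre M : Nalpha f M -> centre (E2on (gen_subring f)) M.
Proof.
case=> T [ET ->]; apply: centre_Eseq_map; rewrite ET.
by split=> [|g _]; [exists [::] | rewrite mul1mx mulmx1].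
Qed.

Lemma Nalpha_mul M1 M2 : Nalpha f M1 -> Nalpha f M2 -> Nalpha f (M1 *m M2).
Proof.
case=> [T1 [ET1 ->]] [T2 [ET2 ->]]; exists (T1 ++ T2).
by rewrite map_cat !Eseq_cat ET1 ET2 mulmx1.
Qed.

Lemma Nalpha_inv M M' : Nalpha f M -> M *m M' = 1%:M -> Nalpha f M'.
Proof.
case=> T [ET ->] MM'; exists (inv_seq T); split.
  by rewrite -[Eseq (inv_seq T)]mul1mx -ET Eseq_inv_seqK.
by rewrite map_inv_seq -[M']mul1mx -(Eseq_inv_seqVK (map f T)) -mulmxA MM' mulmx1.
Qed.

Lemma Nalpha_normal : normal_subgroup (E2on (gen_subring f)) (Nalpha f).
Proof.
split=> [M /Nalpha_centre [] //||||g g' M Gg gg' _ NM].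
- by exists [::].
- exact: Nalpha_mul.
- by move=> M M' NM MM' _; apply: Nalpha_inv MM'.
have [_ cM] := Nalpha_centre NM.
by rewrite -cM // -mulmxA gg' mulmx1.
Qed.

Lemma coset_Nalpha_eq T1 T2 M : Eseq T1 = Eseq T2 ->
  coset (Nalpha f) (Eseq (map f T1)) M -> coset (Nalpha f) (Eseq (map f T2)) M.
Proof.
move=> ET [Z [NZ ->]]; exists (Z *m Eseq (map f (T1 ++ inv_seq T2))); split.
  apply: Nalpha_mul => //; exists (T1 ++ inv_seq T2).
  by rewrite Eseq_cat ET Eseq_inv_seqK.
by rewrite map_cat map_inv_seq Eseq_cat -!mulmxA Eseq_inv_seqVK mulmx1.
Qed.

Lemma coset_Nalpha_mul T1 T2 M :
  coset (Nalpha f) (Eseq (map f (T1 ++ T2))) M <->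
  setmul (coset (Nalpha f) (Eseq (map f T1))) (coset (Nalpha f) (Eseq (map f T2))) M.
Proof.
rewrite map_cat Eseq_cat.
split=> [[Z [NZ ->]] | [_ [_ [[Z1 [NZ1 ->]] [[Z2 [NZ2 ->]] ->]]]]].
  exists (Z *m Eseq (map f T1)), (1%:M *m Eseq (map f T2)); split; first by exists Z.
  by split; [exists 1%:M; split=> //; exists [::] | rewrite mul1mx mulmxA].
exists (Z1 *m Z2); split; first exact: Nalpha_mul.
have [_ cZ2] := Nalpha_centre NZ2.
by rewrite !mulmxA -(mulmxA Z1 Z2) cZ2 ?mulmxA //; apply: E2on_gen_subring_map.
Qed.

End JordanHomomorphism.

Theorem theorem3p6 (R R' : pzRingType) (f : R -> R') (hf : jordan_hom f) :
  (* (a) *)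
  (forall T : seq R, centre (E2 (R:=R)) (Eseq T) ->
     centre (E2on (gen_subring f)) (Eseq (map f T))) /\
  (* (b) *)
  (forall M, Nalpha f M -> centre (E2on (gen_subring f)) M) /\
  (* (c) normality *)
  normal_subgroup (E2on (gen_subring f)) (Nalpha f) /\
  (* (c) α_E : E(T) ↦ N_α·E(T^α) is well defined ... *)
  (forall T1 T2 : seq R, Eseq T1 = Eseq T2 ->
     forall M, coset (Nalpha f) (Eseq (map f T1)) M <->
               coset (Nalpha f) (Eseq (map f T2)) M) /\
  (* ... and a group homomorphism into E_2(R'')/N_α *)
  (forall T1 T2 T3 : seq R, Eseq T3 = Eseq T1 *m Eseq T2 ->
     forall M, coset (Nalpha f) (Eseq (map f T3)) M <->
               setmul (coset (Nalpha f) (Eseq (map f T1)))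
                      (coset (Nalpha f) (Eseq (map f T2))) M).
Proof.
have well_defined T1 T2 : Eseq T1 = Eseq T2 -> forall M,
    coset (Nalpha f) (Eseq (map f T1)) M <-> coset (Nalpha f) (Eseq (map f T2)) M.
  by move=> ET M; split; apply: coset_Nalpha_eq.
split; first exact: centre_Eseq_map.
split; first exact: Nalpha_centre.
split; first exact: Nalpha_normal.
split=> // T1 T2 T3 ET3 M.
rewrite -Eseq_cat in ET3.
by apply: iff_trans (well_defined _ _ ET3 M) _; apply: coset_Nalpha_mul.
Qed.
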